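(* Let $\hat B$ be the bus susceptance matrix of a connected power network with bus set $\mathcal N$, let $\mathcal T \subseteq \mathcal N$, and let $t_1 \neq t_2$ be elements of $\mathcal T$. Let $\sigma_\Gamma^2 > 0$. For $i = 1,2$: let $\theta^{(i)}$ be a random vector in $\mathbb R^{\mathcal N}$ with finite second moments and $\theta^{(i)}_{t_i} = 0$; let $S_i$ be uniformly distributed on $\mathcal T \setminus\{t_i\}$; let $\Gamma_i$ be a real random variable with mean $0$ and variance $\sigma_\Gamma^2$; assume $\theta^{(i)}, S_i, \Gamma_i$ mutually independent; and let $\hat\theta^{(i)}$ be the random vector with $\hat\theta^{(i)}_{t_i} = 0$ and $\hat B\hat\theta^{(i)} = \hat B\theta^{(i)} + \Gamma_i u^{S_i,t_i}$. Define $$\omega = \min\{(v^{s,t}_j)^2 : s,t \in \mathcal T,\ s\ne t,\ j \in \mathcal N,\ v^{s,t}_j \neq 0\},\qquad \lambda = \frac{\sigma_\Gamma^2}{|\mathcal T|-1}\,\omega .$$ Then for every bus $k \in \mathcal N$ there exists $i \in \{1,2\}$ such that the $(k,k)$ entry of the covariance matrix of $\hat\theta^{(i)}$ is at least the $(k,k)$ entry of the covariance matrix of $\theta^{(i)}$ plus $\lambda$, i.e. $\operatorname{Var}(\hat\theta^{(i)}_k) \ge \operatorname{Var}(\theta^{(i)}_k) + \lambda$.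
   Context: DC power flow model: each line $km$ has reactance $x_{km} > 0$, and $\hat B_{kk} = \sum_{km \ni k} 1/x_{km}$, $\hat B_{km} = -1/x_{km}$ for a line $km$, $\hat B_{km} = 0$ otherwise. For distinct buses $s,t$, $u^{s,t}_s = 1$, $u^{s,t}_t = -1$, $u^{s,t}_k = 0$ otherwise, and $v^{s,t}$ is the unique vector with $\hat B v^{s,t} = u^{s,t}$ and $v^{s,t}_t = 0$. *)

From HB Require Import structures.
From mathcomp Require Import all_boot all_order all_algebra.
From mathcomp Require Import all_classical all_reals all_analysis.

Set Implicit Arguments.
Unset Strict Implicit.
Unset Printing Implicit Defensive.

Import Order.TTheory GRing.Theory Num.Theory.

Local Open Scope classical_set_scope.
Local Open Scope ring_scope.

(* Bus susceptance matrix of a network with buses 'I_n, line relation [adj]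
   (adj k m means there is a line km) and reactances x k m. *)
Definition Bhat (R : realType) (n : nat) (adj : rel 'I_n)
    (x : 'I_n -> 'I_n -> R) : 'M[R]_n :=
  \matrix_(k, m) (if k == m then \sum_(m' | adj k m') (x k m')^-1
                  else if adj k m then - (x k m)^-1 else 0).

Definition uvec (R : realType) (n : nat) (s t : 'I_n) : 'cV[R]_n :=
  \col_k (if k == s then 1 else if k == t then -1 else 0).

(* omega = min { (v^{s,t}_j)^2 : s,t in T, s <> t, j bus, v^{s,t}_j <> 0 }
   (head of the list used as neutral element of the min-fold; the list is
   nonempty under the theorem's hypotheses). *)
Definition omega_list (R : realType) (n : nat) (T : {set 'I_n})
    (v : 'I_n -> 'I_n -> 'cV[R]_n) : seq R :=
  [seq (v p.1.1 p.1.2 p.2 ord0) ^+ 2 |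
     p <- enum [pred p : 'I_n * 'I_n * 'I_n |
                [&& p.1.1 \in T, p.1.2 \in T, p.1.1 != p.1.2 &
                    v p.1.1 p.1.2 p.2 ord0 != 0]]].

Definition omega (R : realType) (n : nat) (T : {set 'I_n})
    (v : 'I_n -> 'I_n -> 'cV[R]_n) : R :=
  let l := omega_list T v in \big[Num.min/head 0 l]_(y <- l) y.

(* Mutual independence of the random vector th (values in R^n), the random
   bus S and the real random variable G, stated on the generating pi-systems:
   measurable rectangles for th, arbitrary subsets of the finite set of buses
   for S, measurable sets for G.  Taking some of the sets to be the whole
   space gives the sub-family product rules. *)
Definition mutually_indep (d : measure_display) (Omega : measurableType d)
    (R : realType) (P : probability Omega R) (n : nat)
    (th : Omega -> 'cV[R]_n) (S : Omega -> 'I_n) (G : Omega -> R) : Prop :=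
  forall (A : 'I_n -> set R) (U : set 'I_n) (B : set R),
    (forall j, measurable (A j)) -> measurable B ->
    P ([set w | forall j, A j (th w j ord0)] `&` (S @^-1` U) `&` (G @^-1` B))
    = (P [set w | forall j, A j (th w j ord0)] * P (S @^-1` U) * P (G @^-1` B))%E.

(* Subtracting the defining equations gives B (thetahat - theta - Gamma v^{S,t}) = 0,
   and this vector vanishes at t; as the kernel of the Laplacian B of a connected
   network consists of the constant vectors, thetahat_k = theta_k + Gamma f(S) with
   f(s) = v^{s,t}_k.  Independence and E Gamma = 0 kill all cross terms, so
     Var thetahat_k = Var theta_k + sigma^2 sum_s f(s)^2 P(S = s),
   and the sum is at least omega / (|T| - 1) as soon as f(s) <> 0 for one s in T \ {t}.
   For t = t1 or t = t2 this holds with s the other one: if v^{t1,t2}_k = v^{t2,t1}_k = 0,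
   the kernel vector v^{t1,t2} + v^{t2,t1} vanishes, and the maximum principle applied
   to v^{t1,t2} and to v^{t2,t1} = - v^{t1,t2} forces v^{t1,t2} = 0, contradicting
   B v^{t1,t2} = u^{t1,t2}. *)

From HB Require Import structures.
From mathcomp Require Import all_boot all_order all_algebra.
From mathcomp Require Import all_classical all_reals all_analysis.
From mathcomp Require Import measurable_realfun lra.

Set Implicit Arguments.
Unset Strict Implicit.
Unset Printing Implicit Defensive.

Import Order.TTheory GRing.Theory Num.Theory.
Local Open Scope classical_set_scope.
Local Open Scope ring_scope.

Lemma measurable_preimage d d' (aT : measurableType d) (rT : measurableType d')
    (f : aT -> rT) (B : set rT) :
  measurable_fun setT f -> measurable B -> measurable (f @^-1` B).
Proof. by move=> mf mB; rewrite -[_ @^-1` _]setTI; exact: mf. Qed.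

Section Lfun_facts.
Local Open Scope ereal_scope.
Context d (T : measurableType d) (R : realType) (mu : {measure set T -> \bar R}).

Lemma Lfun_measurable (U : T -> R) p : U \in Lfun mu p -> measurable_fun setT U.
Proof. by case/andP; rewrite inE. Qed.

Lemma Lfun_dominated (r : R) (U V : T -> R) : (1 <= r)%R ->
  measurable_fun setT U -> V \in Lfun mu r%:E ->
  (forall w, `|U w| <= `|V w|)%R -> U \in Lfun mu r%:E.
Proof.
move=> r1 mU V2 UV; rewrite inE; apply/andP; split; first by rewrite inE.
rewrite inE /= /finite_norm unlock /Lnorm; apply: poweR_lty.
have /integrableP[_ intV] := Lfun_integrable r1 V2; apply: le_lt_trans intV.
have mpow (h : T -> R) : measurable_fun setT h ->
    measurable_fun setT (fun w => (`|h w| `^ r)%R%:E).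
  move=> mh; apply/measurable_EFinP.
  by apply: (measurableT_comp (measurable_powR _)); exact: measurableT_comp.
rewrite (eq_integral (fun w => (`|U w| `^ r)%R%:E)); last by [].
apply: ge0_le_integral => //.
- exact: mpow.
- by apply: measurableT_comp => //; exact: mpow (Lfun_measurable V2).
- move=> w _; rewrite gee0_abs ?lee_fin ?powR_ge0 //.
  by rewrite ge0_ler_powR // ?nnegrE // (le_trans ler01 r1).
Qed.

Lemma Lfun_mul_indic (r : R) (U : T -> R) (A : set T) : (1 <= r)%R ->
  U \in Lfun mu r%:E -> measurable A -> (U \* \1_A)%R \in Lfun mu r%:E.
Proof.
move=> r1 Ur mA; apply: (Lfun_dominated r1 _ Ur).
  by apply: measurable_funM; [exact: Lfun_measurable Ur | exact/measurable_indicP].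
move=> w; rewrite /= indicE normrM.
by case: (_ \in _); rewrite ?normr1 ?normr0 ?mulr1 ?mulr0.
Qed.

End Lfun_facts.

Section independence.
Local Open Scope ereal_scope.
Context d (Om : measurableType d) (R : realType) (P : probability Om R).

Definition indep2 (U V : Om -> R) : Prop :=
  forall B1 B2, measurable B1 -> measurable B2 ->
    P (U @^-1` B1 `&` V @^-1` B2) = P (U @^-1` B1) * P (V @^-1` B2).

Lemma expectationM_indep (U V : Om -> R) :
  U \in Lfun P 1 -> V \in Lfun P 1 -> (U \* V)%R \in Lfun P 1 -> indep2 U V ->
  'E_P[U \* V] = 'E_P[U] * 'E_P[V].
Proof.
move=> U1 V1 UV1 UV.
(* The law of (U, V) agrees with mu \x nu on rectangles, hence everywhere; then Fubini. *)
have mU := Lfun_measurable U1; have mV := Lfun_measurable V1.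
pose U' : {mfun Om >-> R} := HB.pack U (isMeasurableFun.Build _ _ _ _ U mU).
pose V' : {mfun Om >-> R} := HB.pack V (isMeasurableFun.Build _ _ _ _ V mV).
have mUV := measurable_fun_pair mU mV.
pose W : {mfun Om >-> (R * R)%type} :=
  HB.pack (fun w => (U w, V w)) (isMeasurableFun.Build _ _ _ _ _ mUV).
pose mu := distribution P U'; pose nu := distribution P V'.
have law_pair A : measurable A -> distribution P W A = (mu \x nu) A.
  by move=> mA; apply/esym; apply: product_measure_unique.
have mprod : measurable_fun setT (EFin \o (fun p : R * R => p.1 * p.2)%R).
  by apply/measurable_EFinP; apply: measurable_funM.
have intUV : P.-integrable setT (EFin \o (U \* V)%R) by exact/Lfun1_integrable.
have intU : P.-integrable setT (EFin \o U) by exact/Lfun1_integrable.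
have intV : P.-integrable setT (EFin \o V) by exact/Lfun1_integrable.
have E_pair : 'E_P[U \* V] = \int[mu \x nu]_p (p.1 * p.2)%:E.
  rewrite unlock -(eq_measure_integral _ (fun A mA _ => law_pair A mA)).
  by rewrite integral_distribution.
have int_prod : (mu \x nu).-integrable setT (fun p : R * R => (p.1 * p.2)%:E).
  have /integrableP[_ fin_law] : (distribution P W).-integrable setT
      (fun p : R * R => (p.1 * p.2)%:E) by exact: (integrable_pushforward (phi := W)).
  apply/integrableP; split => //.
  by rewrite -(eq_measure_integral _ (fun A mA _ => law_pair A mA)).
have int_mu : mu.-integrable setT EFin by exact: (integrable_pushforward (phi := U')).
have int_nu : nu.-integrable setT EFin by exact: (integrable_pushforward (phi := V')).
have mEFin : measurable_fun setT (EFin : R -> \bar R) by exact/measurable_EFinP.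
rewrite E_pair -integral12_prod_meas1 // /fubini_F.
transitivity (\int[mu]_u (u%:E * 'E_P[V])).
  apply: eq_integral => u _; under eq_integral do rewrite EFinM.
  rewrite integralZl //; congr (_ * _).
  by rewrite unlock (integral_distribution (X := V')).
rewrite -(fineK (expectation_fin_num V1)) integralZr //; congr (_ * _).
by rewrite unlock (integral_distribution (X := U')).
Qed.

Lemma indep_eventsC (E A : set Om) : measurable E -> measurable A ->
  P (E `&` A) = P E * P A -> P (E `&` ~` A) = P E * P (~` A).
Proof.
move=> mE mA EA.
have finE : P E \is a fin_num by rewrite fin_num_measure.
rewrite -setDE measureD //; last by rewrite ltey_eq finE.
transitivity (P E - P E * P A); first by congr (_ - _).
by rewrite probability_setC // muleBr ?mule1.
Qed.

Lemma indep_eventsU (E F G : set Om) :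
  measurable E -> measurable F -> measurable G -> F `&` G = set0 ->
  P (E `&` F) = P E * P F -> P (E `&` G) = P E * P G ->
  P (E `&` (F `|` G)) = P E * P (F `|` G).
Proof.
move=> mE mF mG FG EF EG.
rewrite setIUr measureU; try exact: measurableI; last by rewrite setIACA FG setI0.
by rewrite measureU // ge0_muleDr //; congr (_ + _).
Qed.

Lemma indep2_mul_indic (U V : Om -> R) (A : set Om) :
  measurable_fun setT U -> measurable_fun setT V -> measurable A ->
  (forall B1 B2, measurable B1 -> measurable B2 ->
     P (U @^-1` B1 `&` V @^-1` B2 `&` A) = P (U @^-1` B1) * P (V @^-1` B2) * P A) ->
  indep2 U (V \* \1_A)%R.
Proof.
move=> mU mV mA UVA B1 B2 mB1 mB2.
have mUB1 := measurable_preimage mU mB1; have mVB2 := measurable_preimage mV mB2.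
have VA : P (V @^-1` B2 `&` A) = P (V @^-1` B2) * P A.
  by have := UVA _ _ measurableT mB2; rewrite preimage_setT setTI probability_setT mul1e.
have U_VA : P (U @^-1` B1 `&` (V @^-1` B2 `&` A)) = P (U @^-1` B1) * P (V @^-1` B2 `&` A).
  by rewrite setIA UVA // VA muleA.
have [B2_0 | B2_0] := pselect (B2 0%R).
- have -> : (V \* \1_A)%R @^-1` B2 = (V @^-1` B2 `&` A) `|` ~` A.
    apply/seteqP; split => w; rewrite /= indicE;
      case: (pselect (A w)) => Aw; rewrite ?(mem_set Aw) ?(memNset Aw) ?mulr1 ?mulr0.
    + by left.
    + by right.
    + by case=> [[]|].
    + by [].
  apply: indep_eventsU => //; first exact: measurableI.
  - exact: measurableC.
  - by rewrite -setIA setICr setI0.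
  - apply: indep_eventsC => //.
    by have := UVA _ _ mB1 measurableT; rewrite preimage_setT setIT probability_setT mule1.
- have -> // : (V \* \1_A)%R @^-1` B2 = V @^-1` B2 `&` A.
  apply/seteqP; split => w; rewrite /= indicE;
    case: (pselect (A w)) => Aw;
    rewrite ?(mem_set Aw) ?(memNset Aw) ?mulr1 ?mulr0 //; by case.
Qed.

Lemma expectation_mul_indic (U : Om -> R) (A : set Om) :
  U \in Lfun P 1 -> measurable A ->
  (forall B, measurable B -> P (U @^-1` B `&` A) = P (U @^-1` B) * P A) ->
  'E_P[U \* \1_A] = 'E_P[U] * P A.
Proof.
move=> U1 mA UA.
have UA_cst : indep2 U (cst 1%R \* \1_A)%R.
  apply: indep2_mul_indic => //; first exact: Lfun_measurable U1.
  move=> B1 B2 mB1 _; rewrite preimage_cst; case: (_ \in _).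
  - by rewrite setIT probability_setT mule1; exact: UA.
  - by rewrite setI0 set0I measure0 mule0 mul0e.
have one_indic : (cst 1%R \* \1_A)%R = \1_A :> (Om -> R).
  by apply/funext => w; rewrite /= mul1r.
rewrite one_indic in UA_cst.
have indic1 : (\1_A : Om -> R) \in Lfun P 1.
  by rewrite -one_indic; exact: Lfun_mul_indic (lexx 1%R) (Lfun_cst _ _ _) mA.
by rewrite expectationM_indep ?expectation_indic // Lfun_mul_indic.
Qed.

End independence.

Lemma mul_funA (T : Type) (K : pzSemiRingType) (U V W : T -> K) :
  (U \* V) \* W = U \* (V \* W).
Proof. by apply/funext => w; rewrite /= mulrA. Qed.

Section finite_mixture.
Local Open Scope ereal_scope.
Context d (Om : measurableType d) (R : realType) (P : probability Om R).
Variables (n : nat) (S : Om -> 'I_n).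
Hypothesis mS : forall s, measurable (S @^-1` [set s]).

Lemma mul_comp_sum_indic (U : Om -> R) (h : 'I_n -> R) :
  (U \* (h \o S) = \sum_s h s \o* (U \* \1_(S @^-1` [set s])))%R.
Proof.
apply/funext => w; rewrite fct_sumE (bigD1 (S w)) //= indicE mem_set //= mulr1.
rewrite big1 ?addr0 1?mulrC // => s sSw.
by rewrite /= indicE memNset ?mulr0 ?mul0r // => Ss; rewrite Ss eqxx in sSw.
Qed.

Lemma expectation_mul_comp (U : Om -> R) (h : 'I_n -> R) :
  (forall s, (U \* \1_(S @^-1` [set s]))%R \in Lfun P 1) ->
  'E_P[U \* (h \o S)] = \sum_s (h s)%:E * 'E_P[U \* \1_(S @^-1` [set s])].
Proof.
move=> U1; rewrite mul_comp_sum_indic.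
rewrite -(big_map (fun s => h s \o* (U \* \1_(S @^-1` [set s])))%R predT id).
rewrite expectation_sum; last by move=> _ /mapP[s _ ->]; exact: Lfun_scale.
by rewrite big_map; apply: eq_bigr => s _; rewrite expectationZl.
Qed.

Variables (X G : Om -> R) (f p : 'I_n -> R) (sigma2 : R).
Hypotheses (X2 : X \in Lfun P 2%:E) (G2 : G \in Lfun P 2%:E)
  (EG : 'E_P[G] = 0) (VG : 'V_P[G] = sigma2%:E)
  (PS : forall s, P (S @^-1` [set s]) = (p s)%:E)
  (indep_XGS : forall s B1 B2, measurable B1 -> measurable B2 ->
     P (X @^-1` B1 `&` G @^-1` B2 `&` S @^-1` [set s]) =
     P (X @^-1` B1) * P (G @^-1` B2) * P (S @^-1` [set s])).

Let L2_L1 (U : Om -> R) : U \in Lfun P 2%:E -> U \in Lfun P 1.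
Proof. exact/Lfun_subset12/fin_num_measure. Qed.

(* Found by [done] on the side condition [1 <= 2] of the [Lfun] lemmas. *)
Let le12 : (1 <= 2 :> R)%R. Proof. by rewrite ler1n. Qed.

Let noise_level_L2 s : (G \* \1_(S @^-1` [set s]))%R \in Lfun P 2%:E.
Proof. exact: Lfun_mul_indic. Qed.

Lemma indep_noise_level s B : measurable B ->
  P (G @^-1` B `&` S @^-1` [set s]) = P (G @^-1` B) * P (S @^-1` [set s]).
Proof.
move=> mB; have := indep_XGS s measurableT mB.
by rewrite preimage_setT setTI probability_setT mul1e.
Qed.

Lemma expectation_noise_level s : 'E_P[G \* \1_(S @^-1` [set s])] = 0.
Proof.
by rewrite expectation_mul_indic ?EG ?mul0e //; [exact: L2_L1 | exact: indep_noise_level].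
Qed.

Lemma expectation_cross_level (s : 'I_n) :
  'E_P[((X \* G) \* \1_(S @^-1` [set s]))%R] = 0.
Proof.
rewrite mul_funA expectationM_indep ?expectation_noise_level ?mule0 //.
- exact: L2_L1.
- exact: L2_L1.
- exact: Lfun2_mul_Lfun1.
- apply: indep2_mul_indic; [exact: Lfun_measurable X2 | exact: Lfun_measurable G2 | by [] |].
  exact: indep_XGS.
Qed.

Lemma expectation_sqr_noise_level (s : 'I_n) :
  'E_P[((G \* G) \* \1_(S @^-1` [set s]))%R] = (sigma2 * p s)%:E.
Proof.
have EGG : 'E_P[G \* G] = sigma2%:E.
  have -> : (G \* G = G ^+ 2)%R by apply/funext => w; rewrite /= expr2.
  by rewrite -VG varianceE // EG /= mulr0 oppr0 adde0.
have indep_GG B : measurable B ->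
    P ((G \* G)%R @^-1` B `&` S @^-1` [set s]) =
    P ((G \* G)%R @^-1` B) * P (S @^-1` [set s]).
  move=> mB; apply: (indep_noise_level s (B := (fun x => x * x)%R @^-1` B)).
  by rewrite -[_ @^-1` B]setTI; exact: measurable_funM.
by rewrite expectation_mul_indic // ?EGG ?PS //; exact: Lfun2_mul_Lfun1.
Qed.

Lemma variance_add_mixture :
  'V_P[(X \+ G \* (f \o S))%R] = 'V_P[X] + (sigma2 * \sum_s f s ^+ 2 * p s)%:E.
Proof.
set Y := (G \* (f \o S))%R.
have Y2 : Y \in Lfun P 2%:E.
  by rewrite /Y mul_comp_sum_indic; apply: rpred_sum => s _; exact: Lfun_scale.
have EY : 'E_P[Y] = 0.
  rewrite expectation_mul_comp => [|s]; last exact: L2_L1.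
  by rewrite big1 // => s _; rewrite expectation_noise_level mule0.
have EXY : 'E_P[X * Y] = 0.
  have -> : (X * Y = (X \* G) \* (f \o S))%R by apply/funext => w; rewrite /= mulrA.
  rewrite expectation_mul_comp => [|s]; last first.
    by rewrite mul_funA; exact: Lfun2_mul_Lfun1.
  by rewrite big1 // => s _; rewrite expectation_cross_level mule0.
have EY2 : 'E_P[Y ^+ 2] = (sigma2 * \sum_s f s ^+ 2 * p s)%:E.
  have -> : (Y ^+ 2 = (G \* G) \* ((fun s => f s ^+ 2) \o S))%R.
    by apply/funext => w; rewrite /Y /= !expr2 mulrACA.
  rewrite expectation_mul_comp => [|s]; last first.
    by rewrite mul_funA; exact: Lfun2_mul_Lfun1.
  under eq_bigr do rewrite expectation_sqr_noise_level -EFinM.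
  by rewrite sumEFin mulr_sumr; congr EFin; apply: eq_bigr => s _; rewrite mulrCA mulrA.
have XY0 : covariance P X Y = 0.
  rewrite covarianceE ?EXY ?EY ?mule0 ?sube0 //; first exact: L2_L1.
  - exact: L2_L1.
  - exact: Lfun2_mul_Lfun1.
by rewrite varianceD // XY0 mule0 adde0 (varianceE Y2) EY2 EY /= mulr0 oppr0 adde0.
Qed.

End finite_mixture.

Lemma uvecN (R : realType) n (s t : 'I_n) : s != t -> uvec R t s = - uvec R s t.
Proof.
move=> st; apply/matrixP => m j; rewrite !mxE.
case: (eqVneq m s) => [->|ms]; rewrite ?(negbTE st) ?eqxx //.
by case: eqP; rewrite ?opprK ?oppr0.
Qed.

Lemma uvec_le0 (R : realType) n (s t m : 'I_n) : m != s -> uvec R s t m 0 <= 0.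
Proof. by move=> ms; rewrite mxE (negbTE ms); case: eqP; rewrite ?lerN10. Qed.

Section susceptance.
Variables (R : realType) (n : nat) (adj : rel 'I_n) (x : 'I_n -> 'I_n -> R).
Hypotheses (adj_sym : symmetric adj) (adj_irr : irreflexive adj)
  (x_sym : forall k m, x k m = x m k)
  (x_pos : forall k m, adj k m -> 0 < x k m)
  (connected : forall k m, connect adj k m).

Local Notation B := (Bhat adj x).

Lemma Bhat_mulmxE (z : 'cV[R]_n) m :
  (B *m z) m 0 = \sum_(m' | adj m m') (z m 0 - z m' 0) / x m m'.
Proof.
rewrite mxE (bigD1 m) //= mxE eqxx.
have -> : \sum_(j | j != m) B m j * z j 0 = \sum_(j | adj m j) - (x m j)^-1 * z j 0.
  rewrite big_mkcond [RHS]big_mkcond; apply: eq_bigr => j _ /=; rewrite mxE.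
  case: (eqVneq j m) => [->|jm]; first by rewrite adj_irr.
  by case: (adj m j); rewrite ?mul0r.
by rewrite mulr_suml -big_split; apply: eq_bigr => j _; rewrite mulrBl mulNr !(mulrC _^-1).
Qed.

Lemma sum_Bhat_mulmx (z : 'cV[R]_n) : \sum_m (B *m z) m 0 = 0.
Proof.
pose F m m' := if adj m m' then (z m 0 - z m' 0) / x m m' else 0.
have FN m m' : F m' m = - F m m'.
  rewrite /F (adj_sym m' m); case: (adj m m'); rewrite ?oppr0 //.
  by rewrite x_sym -mulNr opprB.
have -> : \sum_m (B *m z) m 0 = \sum_m \sum_m' F m m'.
  by apply: eq_bigr => m _; rewrite Bhat_mulmxE big_mkcond.
have sumN : \sum_m \sum_m' F m m' = - \sum_m \sum_m' F m m'.
  rewrite [LHS]exchange_big -sumrN; apply: eq_bigr => m _.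
  by rewrite -sumrN; apply: eq_bigr => m' _; rewrite FN.
lra.
Qed.

Lemma Bhat_max_principle (z : 'cV[R]_n) k0 :
  (forall m, z m 0 <= z k0 0) ->
  (forall m, z m 0 = z k0 0 -> (B *m z) m 0 <= 0) ->
  forall m, z m 0 = z k0 0.
Proof.
move=> zmax Bz_le0.
have max_adj a b : adj a b -> z a 0 = z k0 0 -> z b 0 = z k0 0.
  move=> ab za.
  have terms_ge0 m' : adj a m' -> 0 <= (z a 0 - z m' 0) / x a m'.
    by move=> am'; rewrite divr_ge0 // ?subr_ge0 ?za ?zmax // ltW // x_pos.
  have sum0 : \sum_(m' | adj a m') (z a 0 - z m' 0) / x a m' = 0.
    by apply/eqP; rewrite eq_le -Bhat_mulmxE Bz_le0 //= Bhat_mulmxE sumr_ge0.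
  move/eqP: (psumr_eq0P terms_ge0 sum0 ab).
  by rewrite mulf_eq0 invr_eq0 (gt_eqF (x_pos ab)) orbF subr_eq0 => /eqP <-.
have along_path p a : z a 0 = z k0 0 -> path adj a p -> z (last a p) 0 = z k0 0.
  by elim: p a => [|b p IHp] a za //= /andP[ab pb]; exact: IHp (max_adj a b ab za) pb.
move=> m; have /connectP[p p_path ->] := connected k0 m.
exact: along_path.
Qed.

Lemma Bhat_ker_const (z : 'cV[R]_n) : B *m z = 0 -> forall m m', z m 0 = z m' 0.
Proof.
move=> Bz0 m m'.
have [k0 _ zk0] := @arg_maxP _ R _ m xpredT (fun i => z i 0) isT.
have zk0_le0 i : z i 0 = z k0 0 -> (B *m z) i 0 <= 0 by rewrite Bz0 mxE.
by rewrite !(Bhat_max_principle (fun i => zk0 i isT) zk0_le0).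
Qed.

Lemma Bhat_ker_eq0 (z : 'cV[R]_n) t : B *m z = 0 -> z t 0 = 0 -> z = 0.
Proof.
move=> Bz0 zt; apply/matrixP => i j.
by rewrite (ord1 j) mxE (Bhat_ker_const Bz0 i t).
Qed.

Lemma Bhat_le0 (z : 'cV[R]_n) w :
  (forall m, m != w -> (B *m z) m 0 <= 0) -> z w 0 = 0 -> forall m, z m 0 <= 0.
Proof.
move=> Bz_le0 zw m.
have [k0 _ zk0] := @arg_maxP _ R _ m xpredT (fun i => z i 0) isT.
apply: le_trans (zk0 m isT) _; rewrite leNgt; apply/negP => zk0_gt0.
suff : z w 0 = z k0 0 by rewrite zw => /eqP; rewrite eq_sym (gt_eqF zk0_gt0).
apply: (Bhat_max_principle (fun i => zk0 i isT)) => i zi.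
by apply: Bz_le0; apply: contraTneq zk0_gt0 => iw; rewrite -zi iw zw ltxx.
Qed.

Variable v : 'I_n -> 'I_n -> 'cV[R]_n.
Hypotheses (v_sol : forall s t, s != t -> B *m v s t = uvec R s t)
  (v_t : forall s t, s != t -> v s t t 0 = 0).

Lemma potential_neq0 s t : s != t -> forall k, v s t k 0 != 0 \/ v t s k 0 != 0.
Proof.
move=> st k; set a := v s t; set b := v t s.
have ts : t != s by rewrite eq_sym.
apply/orP; rewrite -negb_and; apply/negP => /andP[/eqP ak /eqP bk].
have Bab : B *m (a + b) = 0 by rewrite mulmxDr v_sol // v_sol // (uvecN R st) addrN.
have bE m : b m 0 = - a m 0.
  have := Bhat_ker_const Bab m k; rewrite !mxE ak bk addr0 => /eqP.
  by rewrite addr_eq0 => /eqP ->; rewrite opprK.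
have a_le0 : forall m, a m 0 <= 0.
  apply: (Bhat_le0 (w := s)) => [m ms|]; first by rewrite v_sol // uvec_le0.
  by rewrite -[a s 0]opprK -bE v_t // oppr0.
have b_le0 : forall m, b m 0 <= 0.
  apply: (Bhat_le0 (w := t)) => [m mt|]; first by rewrite v_sol // uvec_le0.
  by rewrite bE v_t // oppr0.
have a0 : a = 0.
  apply/matrixP => m j; rewrite (ord1 j) mxE; apply/eqP; rewrite eq_le a_le0 /=.
  by rewrite -oppr_le0 -bE.
have := congr1 (fun M : 'cV[R]_n => M s 0) (v_sol st); rewrite -/a a0 mulmx0 !mxE eqxx.
by move/eqP; rewrite eq_sym oner_eq0.
Qed.

Lemma Bhat_shift_eq (th thh : 'cV[R]_n) g s t :
  B *m thh = B *m th + g *: uvec R s t -> thh t 0 = 0 -> th t 0 = 0 ->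
  thh = th + g *: v s t.
Proof.
move=> Bthh thh_t th_t.
have B_diff : B *m (thh - th) = g *: uvec R s t.
  by rewrite mulmxBr Bthh addrAC subrr add0r.
(* [v_sol] says nothing about [v t t]; but u^{t,t} is the unit vector at t while the
   entries of [B *m z] sum to 0, so [g] vanishes when [s = t]. *)
have g0 : s = t -> g = 0.
  move=> st; have := sum_Bhat_mulmx (thh - th); rewrite B_diff st.
  rewrite (bigD1 t) //= big1 => [|m mt]; last by rewrite !mxE (negbTE mt) mulr0.
  by rewrite !mxE eqxx mulr1 addr0.
have ker : B *m (thh - th - g *: v s t) = 0.
  case: (eqVneq s t) => [st|st]; first by rewrite g0 // scale0r subr0 B_diff g0 // scale0r.
  by rewrite mulmxBr -scalemxAr v_sol // B_diff subrr.
have zt : (thh - th - g *: v s t) t 0 = 0.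
  rewrite !mxE thh_t th_t subrr sub0r.
  case: (eqVneq s t) => [/g0 ->|st]; first by rewrite mul0r oppr0.
  by rewrite v_t // mulr0 oppr0.
by apply/eqP; rewrite -subr_eq0 opprD addrA (Bhat_ker_eq0 ker zt).
Qed.

End susceptance.

Lemma omega_le (R : realType) n (T : {set 'I_n}) (v : 'I_n -> 'I_n -> 'cV[R]_n)
    s t j :
  s \in T -> t \in T -> s != t -> v s t j 0 != 0 -> omega T v <= v s t j 0 ^+ 2.
Proof.
move=> sT tT st vj; rewrite /omega.
apply: (@ge_bigmin_seq _ _ _ _ _ (v s t j 0 ^+ 2)) => //.
apply/mapP; exists (s, t, j) => //.
by rewrite mem_enum inE /= sT tT st vj.
Qed.

Lemma mutually_indep_coord d (Om : measurableType d) (R : realType)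
    (P : probability Om R) n (th : Om -> 'cV[R]_n) (S : Om -> 'I_n) (G : Om -> R) :
  mutually_indep P th S G ->
  forall k s B1 B2, measurable B1 -> measurable B2 ->
    P ((fun w => th w k ord0) @^-1` B1 `&` G @^-1` B2 `&` S @^-1` [set s]) =
    (P ((fun w => th w k ord0) @^-1` B1) * P (G @^-1` B2) * P (S @^-1` [set s]))%E.
Proof.
move=> indep k s B1 B2 mB1 mB2.
pose A j := if j == k then B1 else setT.
have coord : [set w | forall j, A j (th w j ord0)] = (fun w => th w k ord0) @^-1` B1.
  apply/seteqP; split => w /=; first by move/(_ k); rewrite /A eqxx.
  by move=> thk j; rewrite /A; case: eqP => [->|].
rewrite setIAC -coord indep; last by [].
- by rewrite muleAC.
- by move=> j; rewrite /A; case: eqP.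
Qed.

Theorem lemma9 (R : realType) (n : nat) (adj : rel 'I_n)
  (x : 'I_n -> 'I_n -> R)
  (adj_sym : symmetric adj) (adj_irr : irreflexive adj)
  (x_sym : forall k m, x k m = x m k)
  (x_pos : forall k m, adj k m -> 0 < x k m)
  (connected : forall k m, connect adj k m)
  (v : 'I_n -> 'I_n -> 'cV[R]_n)
  (v_sol : forall s t, s != t -> Bhat adj x *m v s t = uvec R s t)
  (v_t : forall s t, s != t -> v s t t ord0 = 0)
  (T : {set 'I_n}) (t : 'I_2 -> 'I_n)
  (tT : forall i, t i \in T) (t12 : t 0 != t 1)
  (sigma2 : R) (sigma2_pos : 0 < sigma2)
  (d : measure_display) (Omega : measurableType d) (P : probability Omega R)
  (theta : 'I_2 -> Omega -> 'cV[R]_n)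
  (theta_L2 : forall i j, (fun w => theta i w j ord0) \in Lfun P 2%:E)
  (theta_t : forall i w, theta i w (t i) ord0 = 0)
  (S : 'I_2 -> Omega -> 'I_n)
  (S_meas : forall i s, measurable (S i @^-1` [set s]))
  (S_unif : forall i s, P (S i @^-1` [set s]) =
     (if s \in T :\ t i then ((#|T| - 1)%:R^-1)%:E else 0%E))
  (Gamma : 'I_2 -> Omega -> R)
  (Gamma_L2 : forall i, Gamma i \in Lfun P 2%:E)
  (Gamma_mean : forall i, ('E_P[Gamma i] = 0)%E)
  (Gamma_var : forall i, 'V_P[Gamma i] = sigma2%:E)
  (indep : forall i, mutually_indep P (theta i) (S i) (Gamma i))
  (thetahat : 'I_2 -> Omega -> 'cV[R]_n)
  (thetahat_t : forall i w, thetahat i w (t i) ord0 = 0)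
  (thetahat_eq : forall i w, Bhat adj x *m thetahat i w =
     Bhat adj x *m theta i w + Gamma i w *: uvec R (S i w) (t i)) :
  let lambda := sigma2 / (#|T| - 1)%:R * omega T v in
  forall k : 'I_n, exists i : 'I_2,
    ('V_P[fun w => thetahat i w k ord0] >=
     'V_P[fun w => theta i w k ord0] + lambda%:E)%E.
Proof.
move=> lambda k.
have [i [s sTi vsk]] : exists i, exists2 s, s \in T :\ t i & v s (t i) k ord0 != 0.
  case: (potential_neq0 adj_irr x_pos connected v_sol v_t t12 k) => vk.
  - by exists 1, (t 0) => //; rewrite in_setD1 t12 tT.
  - by exists 0, (t 1) => //; rewrite in_setD1 eq_sym t12 tT.
exists i.
set f := fun s' => v s' (t i) k ord0.
set c : R := (#|T| - 1)%:R^-1.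
pose p s' := if s' \in T :\ t i then c else 0.
have thetahatE : (fun w => thetahat i w k ord0) =
    ((fun w => theta i w k ord0) \+ Gamma i \* (f \o S i))%R.
  apply/funext => w.
  by rewrite (Bhat_shift_eq adj_sym adj_irr x_sym x_pos connected v_sol v_t
    (thetahat_eq i w) (thetahat_t i w) (theta_t i w)) !mxE.
rewrite thetahatE (variance_add_mixture (S_meas i) f (p := p) (sigma2 := sigma2)) //;
  last 2 first.
- by move=> s'; rewrite S_unif /p; case: ifP.
- exact: mutually_indep_coord.
rewrite leeD2l // lee_fin.
have c_ge0 : 0 <= c by rewrite invr_ge0 ler0n.
have omega_f : omega T v <= f s ^+ 2.
  move: sTi; rewrite in_setD1 => /andP[st sT]; exact: omega_le.
have sum_ge : f s ^+ 2 * c <= \sum_s' f s' ^+ 2 * p s'.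
  rewrite (bigD1 s) //= {1}/p sTi lerDl.
  by apply: sumr_ge0 => s' _; rewrite /p; case: ifP => _; rewrite mulr_ge0 ?sqr_ge0.
rewrite /lambda -/c -mulrA ler_wpM2l ?(ltW sigma2_pos) //.
by apply: le_trans sum_ge; rewrite mulrC ler_wpM2r.
Qed.
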